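(* Let $X$ be any topological space (no separation axioms assumed). If $X$ is an Alster space, then $X$ is totally Lindelöf.
   Context: A filter base on a set $X$ is a nonempty family $\mathcal{F}\subseteq\mathcal{P}(X)$ such that $\emptyset\notin\mathcal{F}$ and $F_0\cap F_1\in\mathcal{F}$ for all $F_0,F_1\in\mathcal{F}$. A filter base $\mathcal{F}$ is stable under countable intersections if for every countable $S\subseteq\mathcal{F}$ there is $H\in\mathcal{F}$ with $H\subseteq\bigcap S$. For $\mathcal{F}\subseteq\mathcal{P}(X)$, $ad(\mathcal{F})=\bigcap\{\overline{F}: F\in\mathcal{F}\}$. A filter base $\mathcal{F}$ on $X$ is total if every filter base $\mathcal{H}\supseteq\mathcal{F}$ on $X$ satisfies $ad(\mathcal{H})\neq\emptyset$. $X$ is totally Lindelöf if every filter base on $X$ stable under countable intersections is contained in some total filter base on $X$ stable under countable intersections. A $G_\delta$ set is a countable intersection of open sets. An Alster covering of $X$ is a family $\mathcal{G}$ of $G_\delta$ subsets of $X$ such that every compact $K\subseteq X$ is contained in some member of $\mathcal{G}$; $X$ is an Alster space if every Alster covering of $X$ has a countable subfamily covering $X$. *)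

From HB Require Import structures.
From mathcomp Require Import all_boot all_order all_algebra.
From mathcomp Require Import all_classical all_reals all_analysis.
Set Implicit Arguments. Unset Strict Implicit. Unset Printing Implicit Defensive.
Local Open Scope classical_set_scope.

Section Defs.
Variable X : topologicalType.

Definition filter_base (F : set (set X)) : Prop :=
  F !=set0 /\ ~ F set0 /\ (forall F0 F1, F F0 -> F F1 -> F (F0 `&` F1)).

Definition stable_countable_inter (F : set (set X)) : Prop :=
  forall S : set (set X), S `<=` F -> countable S ->
    exists2 H, F H & H `<=` \bigcap_(A in S) A.

Definition adh (F : set (set X)) : set X := \bigcap_(A in F) closure A.

Definition total_fb (F : set (set X)) : Prop :=
  filter_base F /\
  forall H : set (set X), filter_base H -> F `<=` H -> adh H !=set0.

Definition totally_Lindelof : Prop :=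
  forall F : set (set X), filter_base F -> stable_countable_inter F ->
    exists G : set (set X), [/\ F `<=` G, total_fb G & stable_countable_inter G].

Definition Gdelta (A : set X) : Prop :=
  exists U : nat -> set X, (forall n, open (U n)) /\ A = \bigcap_n U n.

Definition Alster_covering (G : set (set X)) : Prop :=
  (forall A, G A -> Gdelta A) /\
  (forall K : set X, compact K -> exists2 A, G A & K `<=` A).

Definition Alster_space : Prop :=
  forall G : set (set X), Alster_covering G ->
    exists2 C : set (set X), C `<=` G /\ countable C & \bigcup_(A in C) A = setT.
End Defs.

From mathcomp Require Import all_boot all_order all_algebra.
From mathcomp Require Import all_classical all_reals all_analysis.
Set Implicit Arguments. Unset Strict Implicit. Unset Printing Implicit Defensive.
Local Open Scope classical_set_scope.

(* Let F be a filter base on X stable under countable intersections.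
   1. The Alster property yields a compact set K such that every G_delta
      superset of K meets every member of F (Alster_kernel): otherwise the
      G_delta sets missing some member of F form an Alster covering, and a
      countable subcover contradicts the stability of F.
   2. The trace filter base of F along K consists of the sets f ∩ ⋂T with
      f ∈ F and T a countable family of open supersets of K.  It contains F,
      is a filter base stable under countable intersections (step 1 makes
      its members nonempty), and every filter base H extending it satisfies
      K ∩ cl h ≠ ∅ for all h ∈ H; compactness of K then gives a point of
      K adherent to H (compact_adh), so the trace is total. *)

Lemma countable_setU (T : Type) (A B : set T) :
  countable A -> countable B -> countable (A `|` B).
Proof.
move=> cA cB.
have -> : A `|` B = \bigcup_(b in [set: bool]) (if b then A else B).
  by apply/seteqP; split => x; [case=> h; [exists true | exists false]
                                |case=> -[] _ h; [left | right]].
by apply: bigcup_countable => // -[].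
Qed.

Section AlsterTotallyLindelof.
Variable X : topologicalType.
Implicit Types (F H S : set (set X)) (K A : set X).

Lemma Gdelta_bigcap_open S :
  countable S -> (forall A, S A -> open A) -> Gdelta (\bigcap_(A in S) A).
Proof.
move=> cS oS.
have [g gS] : exists g : nat -> set X, set_surj setT S g by apply/pcard_surjP.
pose e n := if pselect (S (g n)) then g n else setT.
exists e; split.
- by move=> n; rewrite /e; case: pselect => Sg; [exact: oS | exact: openT].
- apply/seteqP; split => x hx.
  + by move=> n _; rewrite /e; case: pselect => // Sg; exact: hx.
  + move=> A SA; have [n _ gn] := gS A SA; have := hx n I.
    by rewrite /e; case: pselect => //; rewrite gn.
Qed.

Lemma stable_bigcap_neq0 F S : filter_base F -> stable_countable_inter F ->
  S `<=` F -> countable S -> \bigcap_(A in S) A !=set0.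
Proof.
move=> [_ [nF0 _]] Fst SF cS; have [g Fg gS] := Fst S SF cS.
have [x gx] : g !=set0 by apply/set0P/negP => /eqP g0; apply: nF0; rewrite -g0.
by exists x; apply: gS.
Qed.

Definition Gdelta_kernel F K : Prop :=
  forall A f, Gdelta A -> K `<=` A -> F f -> A `&` f !=set0.

Lemma Alster_kernel F : Alster_space X -> filter_base F ->
  stable_countable_inter F -> exists2 K, compact K & Gdelta_kernel F K.
Proof.
move=> alster Ffb Fst; apply: contrapT => noK.
(* The G_delta sets missing some member of F cover every compact set. *)
pose G0 := [set A | Gdelta A /\ exists2 f, F f & A `&` f = set0].
have G0_cover : Alster_covering G0.
  split; first by move=> A [].
  move=> K cK; apply: contrapT => noA; apply: noK; exists K => //.
  move=> A f GA KA Ff; apply/set0P/negP => /eqP Af.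
  by apply: noA; exists A => //; split => //; exists f.
have [C [CG0 cC] CT] := alster G0 G0_cover.
have /choice[miss hmiss] : forall A, exists f, C A -> F f /\ A `&` f = set0.
  move=> A; have [CA|nCA] := pselect (C A); last by exists setT.
  by have [_ [f Ff Af]] := CG0 A CA; exists f.
have [x missx] : \bigcap_(f in miss @` C) f !=set0.
  apply: (stable_bigcap_neq0 Ffb Fst); last exact: sub_countable (card_image_le _ _) cC.
  by move=> _ [A CA <-]; exact: (hmiss A CA).1.
have [A CA Ax] : (\bigcup_(A in C) A) x by rewrite CT.
have : (A `&` miss A) x by split => //; apply: missx; exists A.
by rewrite (hmiss A CA).2.
Qed.

Lemma compact_adh K H : compact K -> filter_base H ->
  (forall h, H h -> K `&` closure h !=set0) -> K `&` adh H !=set0.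
Proof.
move=> cK [[h0 Hh0] [_ HI]] meetK.
(* The traces on K of the closures of members of H generate a proper filter
   containing K, whose cluster points lie in every closure. *)
pose Phi := filter_from H (fun h => K `&` closure h).
have Phi_proper : ProperFilter Phi.
  apply: filter_from_proper meetK; apply: filter_from_filter; first by exists h0.
  move=> i j Hi Hj; exists (i `&` j); first exact: HI.
  by move=> x [Kx cx]; split; split => //; apply: closureS cx => y [].
have PhiK : Phi K by exists h0 => // y [].
have [x [Kx clx]] := cK Phi Phi_proper PhiK.
exists x; split => // h Hh; rewrite (clusterE Phi) in clx.
have clKh : closure (K `&` closure h) x by apply: clx; exists h.
rewrite (closure_id (closure h)).1; last exact: closed_closure.
by apply: closureS clKh => y [].
Qed.

Variables (F : set (set X)) (K : set X).

Definition open_supersets : set (set X) := [set U | open U /\ K `<=` U].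

Definition trace : set (set X) :=
  [set B | exists f T, [/\ F f, countable T, T `<=` open_supersets &
                          B = f `&` \bigcap_(U in T) U]].

Lemma sub_trace : F `<=` trace.
Proof. by move=> f Ff; exists f, set0; split => //; rewrite bigcap_set0 setIT. Qed.

Hypotheses (Ffb : filter_base F) (kernel : Gdelta_kernel F K).

(* Members of the trace are nonempty: f ∩ ⋂T meets the G_delta set ⋂T ⊇ K. *)
Lemma trace_neq0 B : trace B -> B !=set0.
Proof.
move=> [f [T [Ff cT TK ->]]]; rewrite setIC; apply: kernel => //.
- by apply: Gdelta_bigcap_open => // U /TK[].
- by move=> x Kx U /TK[_]; apply.
Qed.

Lemma trace_filter_base : filter_base trace.
Proof.
have [[f0 Ff0] [_ FI]] := Ffb.
split; first by exists f0; exact: sub_trace.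
split; first by move=> /trace_neq0[].
move=> _ _ [f1 [T1 [Ff1 cT1 T1K ->]]] [f2 [T2 [Ff2 cT2 T2K ->]]].
exists (f1 `&` f2), (T1 `|` T2); split.
- exact: FI.
- exact: countable_setU.
- by move=> U [/T1K|/T2K].
- by rewrite bigcap_setU setIACA.
Qed.

(* Countably many trace members contain g ∩ ⋂T, where g ∈ F lies below their
   F-parts and T collects their (countably many) open supersets of K. *)
Lemma trace_stable : stable_countable_inter F -> stable_countable_inter trace.
Proof.
move=> Fst S Strace cS.
have /choice[rep hrep] : forall B, exists p : set X * set (set X), S B ->
    [/\ F p.1, countable p.2, p.2 `<=` open_supersets &
        B = p.1 `&` \bigcap_(U in p.2) U].
  move=> B; have [SB|nSB] := pselect (S B); last by exists (setT, set0).
  by have [f [T hT]] := Strace B SB; exists (f, T).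
have [g Fg gS] : exists2 g, F g & g `<=` \bigcap_(f in (fun B => (rep B).1) @` S) f.
  apply: Fst; last exact: sub_countable (card_image_le _ _) cS.
  by move=> _ [B SB <-]; have [] := hrep B SB.
pose T := \bigcup_(B in S) (rep B).2.
exists (g `&` \bigcap_(U in T) U).
- exists g, T; split => //.
  + by apply: bigcup_countable => // B SB; have [] := hrep B SB.
  + by move=> U [B SB]; have [_ _ TK _] := hrep B SB; exact: TK.
- move=> x [gx Tx] B SB; have [_ _ _ ->] := hrep B SB; split.
  + by apply: (gS x gx); exists B.
  + by move=> U hU; apply: Tx; exists B.
Qed.

(* A filter base extending the trace meets K in the closure of each member:
   otherwise the complement of that closure is an open superset of K. *)
Lemma trace_closure_meets H : filter_base H -> trace `<=` H ->
  forall h, H h -> K `&` closure h !=set0.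
Proof.
move=> [_ [nH0 HI]] traceH h Hh; apply/set0P/negP => /eqP Kh.
have [[f0 Ff0] _] := Ffb.
have trace_f0 : trace (f0 `&` \bigcap_(U in [set ~` closure h]) U).
  exists f0, [set ~` closure h]; split => // U ->; split.
  - by rewrite openC; exact: closed_closure.
  - by move=> x Kx cx; have : (K `&` closure h) x by []; rewrite Kh.
apply: nH0; have <- : (f0 `&` \bigcap_(U in [set ~` closure h]) U) `&` h = set0.
  rewrite bigcap_set1; apply/seteqP; split => // x [[_ nx] hx].
  by apply: nx; exact: subset_closure.
by apply: HI => //; exact: traceH.
Qed.

Lemma trace_total : compact K -> total_fb trace.
Proof.
move=> cK; split; first exact: trace_filter_base.
move=> H Hfb traceH; have [x [_ adhx]] := compact_adh cK Hfb
  (trace_closure_meets Hfb traceH).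
by exists x.
Qed.

End AlsterTotallyLindelof.

Theorem mainTheorem2 (X : topologicalType) :
  Alster_space X -> totally_Lindelof X.
Proof.
move=> alster F Ffb Fst.
have [K cK kernel] := Alster_kernel alster Ffb Fst.
exists (trace F K); split.
- exact: sub_trace.
- exact: trace_total Ffb kernel cK.
- exact: trace_stable Fst.
Qed.
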